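(* Consider the scheduling policy SIS with a transmission oracle in $TO_h$ and proactive hearing control $P$. Let $v$ be a node and $p$ a packet in its queue. Then during every $h$ consecutive rounds within the time interval from the arrival of $p$ at $v$ until $p$ is transmitted from $v$, node $v$ transmits at least one packet having priority higher than that of $p$.
   Context: Multi-hop radio network model: a network is a simple graph with $n$ nodes; time is divided into synchronous rounds. Packets are injected by an adversary, each with its complete path fixed at injection. Each node keeps a single, unbounded queue of packets to be forwarded. In each round a node transmits at most one message; a node $w$ hears a message of a neighbor $u$ in a round iff $u$ is the only neighbor of $w$ transmitting in that round. When $v$ transmits a packet whose next node on its path is $w$ and $w$ hears it, the packet leaves $v$ and is absorbed at $w$ or appended to $w$'s queue. A transmission oracle tells each node in each round whether to transmit. Proactive hearing control $P$: in a round in which the oracle tells $v$ to transmit, $v$ first learns which neighbors would hear its transmission, and the scheduling policy selects a packet among the queued packets whose next node is one of these neighbors (if any), which is then transmitted and heard. A directed link $(u,w)$ is up in a round if a packet transmitted by $u$ to $w$ in that round would be heard by $w$; $TO_h$ is the class of transmission oracles under which every link is up at least once in every $h$ consecutive rounds. Scheduling policy SIS (Shortest-In-System) gives priority to the packet that has been in the system for the shortest time, ties broken arbitrarily at each round; ''packet $p$ has priority over $q$'' means the policy prefers $p$ to $q$. *)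

From mathcomp Require Import all_boot.
Set Implicit Arguments. Unset Strict Implicit. Unset Printing Implicit Defensive.

Section Radio.
Variables (V : finType) (adj : rel V).

Definition simple_graph := symmetric adj /\ irreflexive adj.

(* transmission oracle: in round t, node u is told to transmit iff [oracle t u] *)
Definition oracle_t := nat -> V -> bool.

Definition link_up (oracle : oracle_t) (t : nat) (u w : V) : bool :=
  [&& adj u w, oracle t u &
      [forall u', (oracle t u' && adj u' w) ==> (u' == u)]].

Definition TO (h : nat) (oracle : oracle_t) : Prop :=
  forall (u w : V) (t : nat), adj u w -> exists2 s, t <= s < t + h & link_up oracle s u w.

Variable (P : eqType) (inj : P -> nat) (pth : P -> seq V).

Definition valid_paths : Prop :=
  forall p, exists x s, pth p = x :: s /\ path adj x s.

(* [loc t p = Some i]: at the beginning of round t, packet p is in the system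
   and located at the i-th node of its path (if i is the last index, p has been
   absorbed at its destination).  [loc t p = None]: not yet injected. *)

Definition queued (loc : nat -> P -> option nat) (t : nat) (v : V) (p : P) (i : nat) : Prop :=
  [/\ loc t p = Some i, i.+1 < size (pth p) & nth v (pth p) i = v].

Definition next_node (v : V) (p : P) (i : nat) : V := nth v (pth p) i.+1.

(* A valid execution under oracle [oracle], proactive hearing control P and
   scheduling policy SIS.  [sent t v = Some p] iff v transmits packet p in round t
   (and it is then heard by the next node of p). *)
Definition SIS_P_execution (oracle : oracle_t) (loc : nat -> P -> option nat)
    (sent : nat -> V -> option P) : Prop :=
  (forall p t, t < inj p -> loc t p = None) /\
  (forall p, loc (inj p) p = Some 0) /\
  (forall p t i, loc t p = Some i ->
     loc t.+1 p = if [exists u, sent t u == Some p] then Some i.+1 else Some i) /\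
  (* proactive hearing control: only transmit when told, a queued packet whose
     next node hears the transmission *)
  (forall t v p, sent t v = Some p ->
     oracle t v /\ exists i, queued loc t v p i /\ link_up oracle t v (next_node v p i)) /\
  (* if told to transmit and some eligible packet exists, the policy selects one;
     SIS: the selected packet has been in the system the shortest time, i.e. has
     the latest injection round among eligible packets (ties arbitrary) *)
  (forall t v, oracle t v ->
     (exists p i, queued loc t v p i /\ link_up oracle t v (next_node v p i)) ->
     exists p, sent t v = Some p /\
       forall q i, queued loc t v q i -> link_up oracle t v (next_node v q i) ->
         inj q <= inj p).

End Radio.

From mathcomp Require Import all_boot.

Set Implicit Arguments.
Unset Strict Implicit.
Unset Printing Implicit Defensive.

(** While [p] waits at [v], the link from [v] to the next node of [p] comes up
    within every [h] rounds.  In such a round [v] is told to transmit and [p]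
    is eligible, so proactive hearing control makes [v] transmit some eligible
    packet; by SIS its injection round is at least that of [p], and it is not
    [p] itself since [p] has not left [v] yet. *)

Section SISExecution.

Variables (V : finType) (adj : rel V) (P : eqType) (inj : P -> nat)
  (pth : P -> seq V) (oracle : oracle_t V)
  (loc : nat -> P -> option nat) (sent : nat -> V -> option P).

Lemma next_node_adj (v : V) (p : P) (i : nat) :
  valid_paths adj pth -> i.+1 < size (pth p) ->
  adj (nth v (pth p) i) (next_node pth v p i).
Proof.
move=> /(_ p) [x [s [Ep /(pathP x) Hpath]]] lt_i; rewrite /next_node Ep in lt_i *.
by rewrite (set_nth_default x v (ltnW lt_i)) (set_nth_default x v lt_i) Hpath.
Qed.

Hypothesis sent_queued : forall t u q, sent t u = Some q ->
  oracle t u /\ exists i, queued pth loc t u q i /\ link_up adj oracle t u (next_node pth u q i).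

Lemma sender_of_queued (t : nat) (u v : V) (p : P) (i : nat) :
  sent t u = Some p -> queued pth loc t v p i -> u = v.
Proof.
move=> /sent_queued [_ [j [[locj lt_j nth_j] _]]] [loci lt_i nth_i].
move: locj; rewrite loci => -[Eij]; subst j.
by rewrite -nth_j (set_nth_default v u (ltnW lt_j)) nth_i.
Qed.

Hypothesis loc_step : forall q t i, loc t q = Some i ->
  loc t.+1 q = if [exists u, sent t u == Some q] then Some i.+1 else Some i.

Lemma queued_until_sent (v : V) (p : P) (i ta te : nat) :
  queued pth loc ta v p i ->
  (forall s, ta <= s < te -> sent s v <> Some p) ->
  forall s, ta <= s <= te -> queued pth loc s v p i.
Proof.
move=> Hq not_sent s /andP[le_ta_s]; rewrite -(subnKC le_ta_s).
elim: (s - ta) => [|k IHk] le_k; first by rewrite addn0.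
have lt_k : ta + k < te by rewrite -addnS.
have [locq lt_i nth_i] := IHk (ltnW lt_k).
split=> //; rewrite addnS (loc_step locq).
case: existsP => // -[u /eqP sent_u].
have Euv := sender_of_queued sent_u (IHk (ltnW lt_k)); subst u.
by case: (not_sent (ta + k)) => //; rewrite leq_addr.
Qed.

End SISExecution.

Theorem lemma2 (V : finType) (adj : rel V) (P : eqType) (inj : P -> nat)
    (pth : P -> seq V) (h : nat) (oracle : nat -> V -> bool)
    (loc : nat -> P -> option nat) (sent : nat -> V -> option P) :
  simple_graph adj ->
  valid_paths adj pth ->
  TO adj h oracle ->
  SIS_P_execution adj inj pth oracle loc sent ->
  forall (v : V) (p : P) (i ta : nat),
    (* p arrives at (is in the queue of) v at round ta *)
    queued pth loc ta v p i ->
    (* every h consecutive rounds t, ..., t+h-1 after the arrival during which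
       p has not yet been transmitted from v (i.e. lying within the interval from
       the arrival of p at v until p is transmitted from v, if ever) *)
    forall t, ta <= t ->
    (forall s, ta <= s < t + h -> sent s v <> Some p) ->
      exists2 s, t <= s < t + h &
        exists q, [/\ sent s v = Some q, q != p & inj p <= inj q].
Proof.
move=> _ paths_ok oracle_TO [_ [_ [loc_step [sent_queued SIS]]]] v p i ta Hq t le_ta_t not_sent.
have [lt_i nth_i] : i.+1 < size (pth p) /\ nth v (pth p) i = v by case: Hq.
have link_adj : adj v (next_node pth v p i).
  by rewrite -[X in adj X]nth_i; apply: next_node_adj.
have [s /andP[le_t_s lt_s] link_s] := oracle_TO _ _ t link_adj.
have le_ta_s : ta <= s by apply: leq_trans le_t_s.
have Hq_s : queued pth loc s v p i.
  by apply: (queued_until_sent sent_queued loc_step Hq not_sent); rewrite le_ta_s ltnW.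
have [||q [sent_q max_q]] := SIS s v; first by case/and3P: link_s.
  by exists p, i.
exists s; first by rewrite le_t_s.
exists q; split=> //; last exact: max_q Hq_s link_s.
by apply/eqP => Eqp; apply: (not_sent s); rewrite ?le_ta_s // -Eqp.
Qed.
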